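(* Let $X$ be a strongly-stable sequence with respect to a full BST $T$, and assume $X$ is a whole multiple of its atomic sequence. Then $$\hat c(GF,X,T)=\sum_{x\text{ a leaf of }T}\frac{d(x)+1}{2^{d(x)}}.$$
   Context: Binary search tree model. Keys are $\{1,\dots,n\}$. A query sequence is $X=[x_1,\dots,x_m]$, and $T_0$ is an initial BST. An algorithm $A$ serves $x_1,\dots,x_m$ in order. Before serving $x_t$ it holds a BST $T_{t-1}$; it searches $x_t$ from the root and may then restructure the tree by rotations into $T_t$. Let $P_t$ be the set of nodes on the root-to-$x_t$ path of $T_{t-1}$, and let $U_t$ be the node set of the minimal subtree containing all edges rotated in transforming $T_{t-1}$ into $T_t$. The cost at time $t$ is $|P_t\cup U_t|$. $\mathrm{cost}(A,X,T_0)$ is the sum of these costs, and $\hat c(A,X,T_0)=\mathrm{cost}(A,X,T_0)/m$. $d(x)$ is the number of edges from the root to $x$. Greedy Future ($GF$). After finding $x_t$ in $T_{t-1}$, let $v_1<\dots<v_k$ be the keys on the root-to-$x_t$ path, set $v_0=-\infty$ and $v_{k+1}=+\infty$, and let $R_0,\dots,R_k$ be the subtrees hanging off this path. For each $i$, $\tau(v_i)$ is the smallest $s>t$ with $x_s\in(v_{i-1},v_{i+1})$, or $+\infty$ if there is none. $GF$ rearranges $v_1,\dots,v_k$ as a treap: a BST in key order and a heap in $\tau$, with the smallest $\tau$ at the top. Ties in $\tau$ are broken in favor of the node of smaller depth in $T_{t-1}$. It then reattaches $R_0,\dots,R_k$ unchanged at their unique positions, giving $T_t$. Stable sequences. Let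 $T$ be a full binary search tree (every inner node has exactly two children), and let $X$ be a query sequence consisting only of keys stored at leaves of $T$. For an inner node $v$, let $X_v$ be the subsequence of $X$ consisting of the queries to keys in the subtree of $v$. The node $v$ is strongly-stable if consecutive queries of $X_v$ alternate between the left and right subtrees of $v$. $X$ (and $T$) is strongly-stable if every inner node of $T$ is strongly-stable. Given $T$ and the subtree each node's alternation starts with, the sequence is determined up to its length. Its atomic sequence is the shortest such sequence all of whose repetitions are again such sequences. $X$ is a whole multiple of its atomic sequence if it is a concatenation of copies of it. *)

From HB Require Import structures.
From mathcomp Require Import all_boot all_algebra.
Set Implicit Arguments. Unset Strict Implicit. Unset Printing Implicit Defensive.

Inductive bst := BNil | BNode of bst & nat & bst.

Fixpoint bst_eqb (s t : bst) : bool :=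
  match s, t with
  | BNil, BNil => true
  | BNode l k r, BNode l' k' r' => [&& bst_eqb l l', k == k' & bst_eqb r r']
  | _, _ => false
  end.

Lemma bst_eqP : Equality.axiom bst_eqb.
Proof.
elim=> [|l IHl k r IHr] [|l' k' r'] /=; try by constructor.
case: (IHl l') => [<-|H]; last by constructor; case.
case: (k =P k') => [<-|H]; last by constructor; case.
by case: (IHr r') => [<-|H]; constructor; [|case].
Qed.
HB.instance Definition _ := hasDecEq.Build bst bst_eqP.

Fixpoint inorder (t : bst) : seq nat :=
  if t is BNode l k r then inorder l ++ k :: inorder r else [::].

Definition bst_on (n : nat) (t : bst) : bool := inorder t == iota 1 n.

Fixpoint full (t : bst) : bool :=
  if t is BNode l _ r then [&& (l == BNil) == (r == BNil), full l & full r] else true.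

Fixpoint leaves (t : bst) : seq nat :=
  match t with
  | BNil => [::]
  | BNode BNil k BNil => [:: k]
  | BNode l _ r => leaves l ++ leaves r
  end.

Fixpoint depth (t : bst) (x : nat) : nat :=
  match t with
  | BNil => 0
  | BNode l k r => if x == k then 0 else if x < k then (depth l x).+1 else (depth r x).+1
  end.

(* For v = BNode l k r: the sides (true = left subtree) of the queries of X_v *)
Definition sides (l : bst) (k : nat) (r : bst) (X : seq nat) : seq bool :=
  [seq (x \in inorder l) | x <- X & x \in inorder (BNode l k r)].

Definition is_inner (l r : bst) : bool := (l != BNil) || (r != BNil).

(* every inner node is strongly-stable (consecutive queries alternate) *)
Fixpoint nodes_stable (t : bst) (X : seq nat) : bool :=
  if t is BNode l k r then
    [&& (is_inner l r ==> sorted (fun a b : bool => a != b) (sides l k r X)),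
        nodes_stable l X & nodes_stable r X]
  else true.

Definition strongly_stable (T : bst) (X : seq nat) : bool :=
  all (fun x => x \in leaves T) X && nodes_stable T X.

(* the side each inner node's alternation starts with (preorder list) *)
Fixpoint start_sides (t : bst) (X : seq nat) : seq (option bool) :=
  if t is BNode l k r then
    if is_inner l r then ohead (sides l k r X) :: (start_sides l X ++ start_sides r X)
    else [::]
  else [::].

Definition rep (j : nat) (A : seq nat) : seq nat := flatten (nseq j A).

Definition repeatable (T : bst) (A : seq nat) : Prop :=
  forall j, 0 < j -> strongly_stable T (rep j A) /\
                     start_sides T (rep j A) = start_sides T A.

Definition atomic_seq (T : bst) (X A : seq nat) : Prop :=
  [/\ A != [::], repeatable T A, start_sides T A = start_sides T X &
      forall B, B != [::] -> repeatable T B -> start_sides T B = start_sides T X ->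
        size A <= size B].

Definition whole_multiple_of_atomic (T : bst) (X : seq nat) : Prop :=
  exists A k, [/\ atomic_seq T X A, 0 < k & X = rep k A].

(* Search for x from the root (root at depth d): returns the path keys in
   increasing order, each with its depth, and the hanging subtrees R_0..R_k
   in key order. *)
Fixpoint decomp (t : bst) (x d : nat) : seq (nat * nat) * seq bst :=
  match t with
  | BNil => ([::], [:: BNil])
  | BNode l k r =>
    if x == k then ([:: (k, d)], [:: l; r])
    else if x < k then
      let p := decomp l x d.+1 in (rcons p.1 (k, d), rcons p.2 r)
    else
      let p := decomp r x d.+1 in ((k, d) :: p.1, l :: p.2)
  end.

Definition in_open (lo hi : option nat) (y : nat) : bool :=
  (if lo is Some a then a < y else true) && (if hi is Some b then y < b else true).

(* entries (key, (tau, depth)); tau is the index in the future sequence of the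
   first query in (v_{i-1}, v_{i+1}), or [size fut] (= +infinity) if none *)
Definition prios (vs : seq (nat * nat)) (fut : seq nat) : seq (nat * (nat * nat)) :=
  [seq let lo := if i is i'.+1 then Some (nth (0, 0) vs i').1 else None in
       let hi := if i.+1 < size vs then Some (nth (0, 0) vs i.+1).1 else None in
       ((nth (0, 0) vs i).1, (find (in_open lo hi) fut, (nth (0, 0) vs i).2))
  | i <- iota 0 (size vs)].

Definition plt (a b : nat * nat) : bool := (a.1 < b.1) || ((a.1 == b.1) && (a.2 < b.2)).

Definition argmin (s : seq (nat * (nat * nat))) : nat :=
  find (fun e => all (fun f => ~~ plt f.2 e.2) s) s.

(* treap on the entries es (in key order) with hanging subtrees Rs
   (size Rs = size es + 1) reattached *)
Fixpoint build (fuel : nat) (es : seq (nat * (nat * nat))) (Rs : seq bst) : bst :=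
  match fuel with
  | 0 => head BNil Rs
  | f.+1 =>
    if es is [::] then head BNil Rs else
    let i := argmin es in
    BNode (build f (take i es) (take i.+1 Rs)) (nth (0, (0, 0)) es i).1
         (build f (drop i.+1 es) (drop i.+1 Rs))
  end.

Definition gf_step (t : bst) (x : nat) (fut : seq nat) : bst :=
  let p := decomp t x 0 in
  let es := prios p.1 fut in
  build (size es) es p.2.

(* total cost of GF: at each step |P_t| (U_t is contained in P_t) *)
Fixpoint gf_cost (t : bst) (X : seq nat) : nat :=
  if X is x :: fut then size (decomp t x 0).1 + gf_cost (gf_step t x fut) fut else 0.

(* Greedy Future never changes the tree on a strongly-stable sequence. Let x be
   queried and let k be on its search path, say with x left of k. By alternation
   the next query y to the subtree of k falls right of k, hence inside the
   interval (v_{i-1}, v_{i+1}) of k, so tau(k) is at most the time of y; while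
   every query in the interval of a deeper path node lies in the subtree of k and
   so comes no earlier than y. Hence k has the least tau below it on the path
   (ties go to the shallower node), the treap rebuilt by GF is the tree itself,
   and a query to x costs d(x) + 1. Alternation of A ++ A at an inner node
   splits the queries of A to its subtree evenly between the two children, so a
   leaf x occurs |A| / 2^d(x) times in A; averaging over X = A^j gives the
   formula. *)

From mathcomp Require Import all_boot all_algebra zify ring.
Set Implicit Arguments. Unset Strict Implicit. Unset Printing Implicit Defensive.

Lemma head_filter_find T (x0 : T) (P : pred T) s :
  head x0 (filter P s) = nth x0 s (find P s).
Proof. by elim: s => //= y s IH; case: (P y). Qed.

Lemma find_le_find T (x0 : T) (P Q : pred T) s :
  (has Q s -> P (nth x0 s (find Q s))) -> find P s <= find Q s.
Proof.
move=> PQ; have [/PQ Pq|/hasNfind ->] := boolP (has Q s); last exact: find_size.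
by rewrite leqNgt; apply/negP => /(before_find x0); rewrite Pq.
Qed.

Lemma alternating_belast b s : path (fun a c : bool => a != c) b s ->
  s = map negb (belast b s).
Proof. by elim: s b => //= c s IH b /andP[bc /IH {1}->]; case: b c bc => -[]. Qed.

Lemma count_alternating (s : seq bool) : sorted (fun a b : bool => a != b) (s ++ s) ->
  count id s = count negb s.
Proof.
case: s => [|b s] //=; rewrite cat_path /= => /andP[alt /andP[lastb _]].
rewrite -[b + _]/(count id (b :: s)) lastI -cats1 count_cat /= addn0.
rewrite [in count negb _](alternating_belast alt) count_map.
have -> : last b s = ~~ b by move: lastb; case: (b); case: last.
by rewrite addnC; congr (_ + _); apply: eq_count => c /=; rewrite negbK.
Qed.

Lemma sum_count_mem (F : nat -> nat) s X : uniq s -> {subset X <= s} ->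
  \sum_(x <- X) F x = \sum_(y <- s) count_mem y X * F y.
Proof.
move=> s_uniq; elim: X => [|x X IH] sub; first by rewrite big_nil big1 // => y.
rewrite big_cons IH => [|y yX]; last by apply: sub; rewrite inE yX orbT.
under [RHS]eq_bigr do rewrite /= mulnDl; rewrite big_split /=; congr (_ + _).
rewrite (bigD1_seq x) ?sub ?mem_head //= eqxx mul1n big1 ?addn0 // => y.
by rewrite eq_sym => /negbTE ->.
Qed.

Lemma sorted_node l k r : sorted ltn (inorder (BNode l k r)) ->
  [/\ sorted ltn (inorder l), sorted ltn (inorder r),
      {in inorder l, forall y, y < k} & {in inorder r, forall y, k < y}].
Proof.
rewrite /= !(sorted_pairwise ltn_trans) pairwise_cat /= => /and4P[lk -> kr ->].
split=> // [y yl|y yr]; last exact: allP kr y yr.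
by move/allrelP: lk => /(_ y k yl); rewrite mem_head => /(_ isT).
Qed.

Lemma leaves_inner l k r : is_inner l r -> leaves (BNode l k r) = leaves l ++ leaves r.
Proof. by case: l => [|? ? ?]; case: r. Qed.

Lemma not_inner l r : ~~ is_inner l r -> l = BNil /\ r = BNil.
Proof. by rewrite /is_inner negb_or !negbK => /andP[/eqP -> /eqP ->]. Qed.

Lemma leaves_subseq t : subseq (leaves t) (inorder t).
Proof.
elim: t => [|l IHl k r IHr] //; case: (boolP (is_inner l r)) => inn.
  rewrite leaves_inner //=; apply: cat_subseq => //.
  exact: subseq_trans IHr (subseq_cons _ _).
by case: (not_inner inn) => -> ->; rewrite /= eqxx.
Qed.

Lemma mem_leaves_node l k r y : sorted ltn (inorder (BNode l k r)) -> is_inner l r ->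
  y \in leaves (BNode l k r) ->
  [/\ y != k, (y \in leaves l) = (y < k), (y \in inorder l) = (y < k),
      (y \in leaves r) = (k < y) & (y \in inorder r) = (k < y)].
Proof.
move=> /sorted_node[_ _ Hl Hr] inn; rewrite leaves_inner // mem_cat.
have inl : {subset leaves l <= inorder l} := mem_subseq (leaves_subseq l).
have inr : {subset leaves r <= inorder r} := mem_subseq (leaves_subseq r).
have notl z : k < z -> z \notin inorder l by move=> kz; apply/negP => /Hl; lia.
have notr z : z < k -> z \notin inorder r by move=> zk; apply/negP => /Hr; lia.
case/orP=> [yL|yR].
  have yk := Hl y (inl y yL); have yr := notr y yk.
  by rewrite (ltn_eqF yk) yL inl // yk (negbTE yr) (contraNF (@inr y) yr) ltnNge ltnW.
have ky := Hr y (inr y yR); have yl := notl y ky.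
by rewrite (gtn_eqF ky) yR inr // ky (negbTE yl) (contraNF (@inl y) yl) ltnNge ltnW.
Qed.

Lemma size_decomp_subtrees t x d :
  size (decomp t x d).2 = (size (decomp t x d).1).+1.
Proof.
elim: t d => [|l IHl k r IHr] d //=.
by case: (x == k) => //; case: (x < k); rewrite /= ?size_rcons ?IHl ?IHr.
Qed.

Lemma decomp_path_keys t x d : all (fun v => v.1 \in inorder t) (decomp t x d).1.
Proof.
elim: t d => [|l IHl k r IHr] d //=.
have kt : k \in inorder l ++ k :: inorder r by rewrite mem_cat mem_head orbT.
case: (x == k); first by rewrite /= kt.
case: (x < k); rewrite /= ?all_rcons kt /=.
  by apply: sub_all (IHl d.+1) => v vl; rewrite mem_cat vl.
by apply: sub_all (IHr d.+1) => v vr; rewrite mem_cat inE vr !orbT.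
Qed.

Lemma decomp_path_depth t x d : all (fun v => d <= v.2) (decomp t x d).1.
Proof.
elim: t d => [|l IHl k r IHr] d //=.
case: (x == k); last case: (x < k); rewrite /= ?all_rcons leqnn //=.
  by apply: sub_all (IHl d.+1) => v /ltnW.
by apply: sub_all (IHr d.+1) => v /ltnW.
Qed.

Lemma size_decomp_path t x d : sorted ltn (inorder t) -> x \in inorder t ->
  size (decomp t x d).1 = (depth t x).+1.
Proof.
elim: t d => [|l IHl k r IHr] d //= /[dup] srt /sorted_node[sl sr Hl Hr].
rewrite mem_cat inE; case: eqVneq => [-> //|x_neq_k] /=.
case: ltnP => [x_lt_k|k_le_x] /orP[xl|xr]; rewrite /= ?size_rcons ?IHl ?IHr //.
- by have := Hr x xr; lia.
- by have := Hl x xl; lia.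
Qed.

Lemma in_open_widen_hi lo hi lo' k y :
  in_open lo hi k -> in_open lo' (Some k) y -> in_open lo' hi y.
Proof. by case: lo hi lo' => [a|] [b|] [c|]; rewrite /in_open /=; lia. Qed.

Lemma in_open_widen_lo lo hi hi' k y :
  in_open lo hi k -> in_open (Some k) hi' y -> in_open lo hi' y.
Proof. by case: lo hi hi' => [a|] [b|] [c|]; rewrite /in_open /=; lia. Qed.

Definition okeys (vs : seq (nat * nat)) : seq (option nat) := [seq Some v.1 | v <- vs].

Lemma in_open_last lo hi vs y :
  in_open lo hi y -> all (fun v => v.1 < y) vs -> in_open (last lo (okeys vs)) hi y.
Proof.
elim: vs lo => //= v vs IH lo /andP[_ hy] /andP[vy Hvs].
by apply: IH => //; rewrite /in_open /= vy.
Qed.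

Lemma in_open_head lo hi vs y :
  in_open lo hi y -> all (fun v => y < v.1) vs -> in_open lo (head hi (okeys vs)) y.
Proof. by case: vs => //= v vs; rewrite /in_open /= => /andP[-> _] /andP[->]. Qed.

Definition prios_within (lo hi : option nat) (vs : seq (nat * nat)) (fut : seq nat) :=
  [seq let lo' := if i is i'.+1 then Some (nth (0, 0) vs i').1 else lo in
       let hi' := if i.+1 < size vs then Some (nth (0, 0) vs i.+1).1 else hi in
       ((nth (0, 0) vs i).1, (find (in_open lo' hi') fut, (nth (0, 0) vs i).2))
  | i <- iota 0 (size vs)].

Fixpoint prios_rec (lo hi : option nat) (vs : seq (nat * nat)) (fut : seq nat) :=
  if vs is v :: vs' then
    (v.1, (find (in_open lo (head hi (okeys vs'))) fut, v.2))
      :: prios_rec (Some v.1) hi vs' fut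
  else [::].

Lemma prios_within_rec lo hi vs fut : prios_within lo hi vs fut = prios_rec lo hi vs fut.
Proof.
elim: vs lo => [|v vs IH] lo //; rewrite /= -IH /prios_within /=.
congr (_ :: _); first by case: vs {IH}.
by rewrite (iotaDl 1 0) -map_comp; apply: eq_map => -[|i].
Qed.

Lemma prios_recE vs fut : prios vs fut = prios_rec None None vs fut.
Proof. exact: prios_within_rec. Qed.

Lemma prios_rec_rcons lo hi vs k d fut :
  prios_rec lo hi (rcons vs (k, d)) fut =
  rcons (prios_rec lo (Some k) vs fut) (k, (find (in_open (last lo (okeys vs)) hi) fut, d)).
Proof. by elim: vs lo => [|v vs IH] lo //=; rewrite IH; case: vs {IH}. Qed.

Lemma size_prios_rec lo hi vs fut : size (prios_rec lo hi vs fut) = size vs.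
Proof. by elim: vs lo => //= v vs IH lo; rewrite IH. Qed.

Lemma prios_rec_ge lo hi vs fut d :
  all (fun v => in_open lo hi v.1) vs -> all (fun v => d < v.2) vs ->
  {in prios_rec lo hi vs fut, forall e, find (in_open lo hi) fut <= e.2.1 /\ d < e.2.2}.
Proof.
move=> Hvs Dvs; suff: forall lo', (forall y, in_open lo' hi y -> in_open lo hi y) ->
    {in prios_rec lo' hi vs fut, forall e, find (in_open lo hi) fut <= e.2.1 /\ d < e.2.2}.
  by apply.
elim: vs Hvs Dvs => // v vs IH /= /andP[vin Hvs] /andP[dv Dvs] lo' sub e.
rewrite inE => /orP[/eqP -> /=|]; last first.
  by apply: (IH Hvs Dvs) => y /(in_open_widen_lo vin).
split=> //; apply: sub_find => y /= yin; apply: sub.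
case: vs {IH} Hvs {Dvs} yin => [_ //|w vs /= /andP[win _]].
exact: in_open_widen_hi win.
Qed.

Lemma plt_irr a : ~~ plt a a.
Proof. by rewrite /plt ltnn eqxx ltnn. Qed.

Lemma plt_asym a b : plt a b -> ~~ plt b a.
Proof. by case: a b => a1 a2 [b1 b2]; rewrite /plt /=; lia. Qed.

Lemma prios_rec_root_min lo hi vs fut d tk :
  all (fun v => in_open lo hi v.1) vs -> all (fun v => d < v.2) vs ->
  tk <= find (in_open lo hi) fut ->
  {in prios_rec lo hi vs fut, forall e, plt (tk, d) e.2}.
Proof.
move=> Hvs Dvs tk_le e /(prios_rec_ge Hvs Dvs)[tau_e d_e].
have := leq_trans tk_le tau_e; rewrite /plt /= d_e andbT; lia.
Qed.

Lemma argmin_rcons_min es e :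
  {in es, forall g, plt e.2 g.2} -> argmin (rcons es e) = size es.
Proof.
move=> emin; rewrite /argmin -cats1 find_cat /= all_cat /= plt_irr andbT.
have -> : all (fun g => ~~ plt g.2 e.2) es by apply/allP => g /emin /plt_asym.
rewrite addn0 ifF //; apply/hasP => -[g ges /allP /(_ e)].
by rewrite mem_cat mem_head orbT => /(_ isT); rewrite emin.
Qed.

Lemma argmin_cons_min e es : {in es, forall g, plt e.2 g.2} -> argmin (e :: es) = 0.
Proof.
move=> emin; rewrite /argmin /= plt_irr /=.
by have -> : all (fun g => ~~ plt g.2 e.2) es by apply/allP => g /emin /plt_asym.
Qed.

Lemma build_nil f Rs : build f [::] Rs = head BNil Rs.
Proof. by case: f. Qed.

Lemma build_node f es Rs : es != [::] ->
  build f.+1 es Rs =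
  BNode (build f (take (argmin es) es) (take (argmin es).+1 Rs))
        (nth (0, (0, 0)) es (argmin es)).1
        (build f (drop (argmin es).+1 es) (drop (argmin es).+1 Rs)).
Proof. by case: es. Qed.

Lemma build_rcons_min f es e Rs r : size Rs = (size es).+1 ->
  {in es, forall g, plt e.2 g.2} ->
  build f.+1 (rcons es e) (rcons Rs r) = BNode (build f es Rs) e.1 r.
Proof.
move=> sRs /argmin_rcons_min emin; rewrite build_node -?size_eq0 ?size_rcons // emin.
rewrite nth_rcons ltnn eqxx -!cats1 take_size_cat // -sRs take_size_cat //.
rewrite (drop_size_cat _ (erefl (size Rs))) drop_oversize ?size_cat ?sRs ?addn1 //.
by rewrite !build_nil.
Qed.

Lemma build_cons_min f e es l Rs : {in es, forall g, plt e.2 g.2} ->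
  build f.+1 (e :: es) (l :: Rs) = BNode l e.1 (build f es Rs).
Proof. by move/argmin_cons_min => emin; rewrite /= emin /= !drop0 build_nil. Qed.

Lemma nodes_stable_behead t x fut : nodes_stable t (x :: fut) -> nodes_stable t fut.
Proof.
elim: t => [|l IHl k r IHr] //= /and3P[st /IHl -> /IHr ->]; rewrite !andbT.
by move: st; rewrite /sides /=; case: (x \in _) => //=; case: is_inner => //= /path_sorted.
Qed.

Lemma stable_next_side l k r x fut : is_inner l r ->
  nodes_stable (BNode l k r) (x :: fut) -> x \in inorder (BNode l k r) ->
  has [in inorder (BNode l k r)] fut ->
  (nth 0 fut (find [in inorder (BNode l k r)] fut) \in inorder l) = (x \notin inorder l).
Proof.
move=> inn /and3P[+ _ _]; rewrite inn /sides /= => + xt; rewrite xt /=.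
rewrite -(head_filter_find 0) has_filter; case: filter => //= y ys /andP[+ _] _.
by case: (x \in inorder l); case: (y \in inorder l).
Qed.

(* [t] is the subtree hanging between the path keys [lo] and [hi]: the future
   queries in that interval are exactly those to [t]. *)
Definition spans (lo hi : option nat) (t : bst) (fut : seq nat) : Prop :=
  {in inorder t, forall y, in_open lo hi y} /\
  {in fut, forall y, in_open lo hi y -> y \in inorder t}.

Lemma spans_left lo hi l k r fut : sorted ltn (inorder (BNode l k r)) ->
  spans lo hi (BNode l k r) fut -> spans lo (Some k) l fut.
Proof.
move=> /sorted_node[_ _ Hl Hr] [tw futw]; split=> [y yl|y yf yw].
  have := tw y; rewrite mem_cat yl /in_open => /(_ isT) /andP[-> _] /=; exact: Hl.
have kw : in_open lo hi k by apply: tw; rewrite mem_cat mem_head orbT.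
move: (yw) => /andP[_ /= yk]; have := futw y yf (in_open_widen_hi kw yw).
by rewrite mem_cat inE => /or3P[// | /eqP yk' | /Hr]; lia.
Qed.

Lemma spans_right lo hi l k r fut : sorted ltn (inorder (BNode l k r)) ->
  spans lo hi (BNode l k r) fut -> spans (Some k) hi r fut.
Proof.
move=> /sorted_node[_ _ Hl Hr] [tw futw]; split=> [y yr|y yf yw].
  have := tw y; rewrite mem_cat inE yr !orbT /in_open => /(_ isT) /andP[_ ->].
  by rewrite andbT; exact: Hr.
have kw : in_open lo hi k by apply: tw; rewrite mem_cat mem_head orbT.
move: (yw) => /andP[/= ky _]; have := futw y yf (in_open_widen_lo kw yw).
by rewrite mem_cat inE => /or3P[/Hl | /eqP yk' | //]; lia.
Qed.

(* The left side is tau(k) (the key before [k] on the path is [last lo (okeys vs)]);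
   the right side bounds the tau of every path node below [k], by [prios_rec_ge]. *)
Lemma root_prio_left l k r x lo hi fut vs :
  sorted ltn (inorder (BNode l k r)) -> is_inner l r ->
  nodes_stable (BNode l k r) (x :: fut) -> x \in inorder l ->
  spans lo hi (BNode l k r) fut -> all (fun v => v.1 \in inorder l) vs ->
  find (in_open (last lo (okeys vs)) hi) fut <= find (in_open lo (Some k)) fut.
Proof.
set t := BNode l k r => srt inn st xl [tw futw] vsl.
have [_ _ Hl Hr] := sorted_node srt.
have xt : x \in inorder t by rewrite mem_cat xl.
apply: (@leq_trans (find [in inorder t] fut)); apply: (@find_le_find nat 0) => hasf.
  have yt := nth_find 0 hasf; have := stable_next_side inn st xt hasf; rewrite xl /=.
  set y := nth 0 fut _ in yt * => yl.
  have ky : k <= y by move: yt; rewrite /= mem_cat yl /= inE => /orP[/eqP -> //|/Hr /ltnW].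
  apply: in_open_last (tw y yt) _.
  by apply: sub_all vsl => v /Hl vk; apply: leq_trans vk ky.
have yw := nth_find 0 hasf; set y := nth 0 fut _ in yw *.
have yf : y \in fut by apply: mem_nth; rewrite -has_find.
have kw : in_open lo hi k by apply: tw; rewrite mem_cat mem_head orbT.
exact: futw y yf (in_open_widen_hi kw yw).
Qed.

Lemma root_prio_right l k r x lo hi fut vs :
  sorted ltn (inorder (BNode l k r)) -> is_inner l r ->
  nodes_stable (BNode l k r) (x :: fut) -> x \in inorder r ->
  spans lo hi (BNode l k r) fut -> all (fun v => v.1 \in inorder r) vs ->
  find (in_open lo (head hi (okeys vs))) fut <= find (in_open (Some k) hi) fut.
Proof.
set t := BNode l k r => srt inn st xr [tw futw] vsr.
have [_ _ Hl Hr] := sorted_node srt.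
have xt : x \in inorder t by rewrite mem_cat inE xr !orbT.
have xl : x \notin inorder l by apply/negP => /Hl; have := Hr x xr; lia.
apply: (@leq_trans (find [in inorder t] fut)); apply: (@find_le_find nat 0) => hasf.
  have yt := nth_find 0 hasf; have := stable_next_side inn st xt hasf; rewrite xl /=.
  set y := nth 0 fut _ in yt * => /Hl yk.
  apply: in_open_head (tw y yt) _.
  by apply: sub_all vsr => v /Hr kv; apply: ltn_trans kv.
have yw := nth_find 0 hasf; set y := nth 0 fut _ in yw *.
have yf : y \in fut by apply: mem_nth; rewrite -has_find.
have kw : in_open lo hi k by apply: tw; rewrite mem_cat mem_head orbT.
exact: futw y yf (in_open_widen_lo kw yw).
Qed.

Lemma build_prios_decomp t x d lo hi fut f :
  sorted ltn (inorder t) -> x \in leaves t -> spans lo hi t fut ->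
  nodes_stable t (x :: fut) -> size (decomp t x d).1 <= f ->
  build f (prios_rec lo hi (decomp t x d).1 fut) (decomp t x d).2 = t.
Proof.
elim: t x d lo hi f => [|l IHl k r IHr] x d lo hi f // srt.
have [inn|/not_inner[-> ->]] := boolP (is_inner l r); last first.
  rewrite inE => /eqP -> _ _; rewrite /= eqxx; case: f => // f _.
  by rewrite build_cons_min // build_nil.
move=> /(mem_leaves_node srt inn)[x_neq_k xLl xl xLr xr] span /[dup] st.
have [sl sr _ _] := sorted_node srt; case/and3P=> _ stl str.
case: ltngtP xLl xl xLr xr => [xk|kx|xk]; last by rewrite xk eqxx in x_neq_k.
- move=> xLl xl _ _; rewrite /= (ltn_eqF xk) xk prios_rec_rcons size_rcons.
  case: f => // f /[!ltnS] Hf.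
  rewrite build_rcons_min ?size_prios_rec ?size_decomp_subtrees ?IHl //.
  + exact: spans_left span.
  + apply: prios_rec_root_min (decomp_path_depth _ _ _) _.
      by apply: sub_all (decomp_path_keys l x d.+1) => v; apply: (spans_left srt span).1.
    exact: root_prio_left srt inn st xl span (decomp_path_keys l x d.+1).
- move=> _ _ xLr xr; rewrite /= (gtn_eqF kx) ltnNge (ltnW kx) /=.
  case: f => // f /[!ltnS] Hf.
  rewrite build_cons_min ?IHr //.
  + exact: spans_right span.
  + apply: prios_rec_root_min (decomp_path_depth _ _ _) _.
      by apply: sub_all (decomp_path_keys r x d.+1) => v; apply: (spans_right srt span).1.
    exact: root_prio_right srt inn st xr span (decomp_path_keys r x d.+1).
Qed.

Lemma gf_step_id T x fut : sorted ltn (inorder T) -> x \in leaves T ->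
  {subset fut <= inorder T} -> nodes_stable T (x :: fut) -> gf_step T x fut = T.
Proof.
move=> srt xL futT st; rewrite /gf_step prios_recE size_prios_rec build_prios_decomp //.
by split=> // y /futT.
Qed.

Lemma gf_cost_stable T X : sorted ltn (inorder T) -> strongly_stable T X ->
  gf_cost T X = \sum_(x <- X) (depth T x).+1.
Proof.
move=> srt; elim: X => [|x fut IH]; first by rewrite big_nil.
case/andP=> /= /andP[xL futL] st.
have inT : {subset leaves T <= inorder T} := mem_subseq (leaves_subseq T).
rewrite big_cons /= size_decomp_path ?inT // gf_step_id //; last first.
  by move=> y /(allP futL) /inT.
by rewrite IH // /strongly_stable futL (nodes_stable_behead st).
Qed.

Lemma count_sides l k r A : sorted ltn (inorder (BNode l k r)) -> is_inner l r ->
  {in A, forall y, y \in inorder (BNode l k r) -> y \in leaves (BNode l k r)} ->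
  count id (sides l k r A) = count [in inorder l] A /\
  count negb (sides l k r A) = count [in inorder r] A.
Proof.
move=> srt inn AL; rewrite /sides !count_map !count_filter.
split; apply: eq_in_count => y yA /=; first by rewrite mem_cat; case: (_ \in _).
have [yt|yt] := boolP (y \in inorder (BNode l k r)).
  have [y_neq_k _ -> _ ->] := mem_leaves_node srt inn (AL y yA yt).
  by rewrite andbT; lia.
by rewrite andbF; apply/esym/negP => yr; move: yt; rewrite mem_cat inE yr !orbT.
Qed.

Lemma count_leaf_depth t A : sorted ltn (inorder t) -> nodes_stable t (A ++ A) ->
  {in A, forall y, y \in inorder t -> y \in leaves t} ->
  {in leaves t, forall x, count_mem x A * 2 ^ depth t x = count [in inorder t] A}.
Proof.
elim: t => [|l IHl k r IHr] // srt /and3P[st stl str] AL x.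
have [inn|/not_inner[-> ->]] := boolP (is_inner l r); last first.
  by rewrite inE => /eqP ->; rewrite /= eqxx muln1; apply: eq_count => y; rewrite /= inE.
have [sl sr _ _] := sorted_node srt.
have [cl cr] := count_sides srt inn AL.
have balanced : count [in inorder l] A = count [in inorder r] A.
  rewrite -cl -cr; apply: count_alternating.
  by move: st; rewrite inn /sides filter_cat map_cat.
have count_t : count [in inorder (BNode l k r)] A =
                count [in inorder l] A + count [in inorder r] A.
  by rewrite -cl -cr (count_predC id) size_map size_filter.
have ALl : {in A, forall y, y \in inorder l -> y \in leaves l}.
  move=> y yA yl; have yt : y \in inorder (BNode l k r) by rewrite mem_cat yl.
  by have [_ -> <- _ _] := mem_leaves_node srt inn (AL y yA yt).
have ALr : {in A, forall y, y \in inorder r -> y \in leaves r}.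
  move=> y yA yr; have yt : y \in inorder (BNode l k r) by rewrite mem_cat inE yr !orbT.
  by have [_ _ _ -> <-] := mem_leaves_node srt inn (AL y yA yt).
move=> /(mem_leaves_node srt inn)[x_neq_k xLl _ xLr _].
rewrite count_t /= (negbTE x_neq_k); case: ltngtP xLl xLr => [xk|kx|xk] xLl xLr.
- by rewrite /= expnS mulnCA IHl // -balanced mul2n addnn.
- by rewrite /= expnS mulnCA IHr // balanced mul2n addnn.
- by rewrite xk eqxx in x_neq_k.
Qed.

Lemma count_rep P j A : count P (rep j A) = j * count P A.
Proof. by rewrite count_flatten map_nseq sumn_nseq mulnC. Qed.

Lemma size_rep j A : size (rep j A) = j * size A.
Proof. by rewrite size_flatten /shape map_nseq sumn_nseq mulnC. Qed.

Import GRing.Theory Num.Theory.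
Local Open Scope ring_scope.

Theorem corollary2 (n : nat) (T : bst) (X : seq nat) :
  bst_on n T -> full T -> strongly_stable T X -> whole_multiple_of_atomic T X ->
  (gf_cost T X)%:R / (size X)%:R =
    \sum_(x <- leaves T) ((depth T x).+1)%:R / (2 ^ depth T x)%N%:R :> rat.
Proof.
move=> /eqP T_keys _ X_stable [A [j [[A_nonnil A_rep _ _] j_pos X_rep]]].
have T_sorted : sorted ltn (inorder T) by rewrite T_keys iota_ltn_sorted.
have T_leaves : {subset leaves T <= inorder T} := mem_subseq (leaves_subseq T).
have [/andP[AA_leaves AA_stable] _] := A_rep 2 isT.
have A_leaves : {subset A <= leaves T}.
  by move=> y yA; apply: (allP AA_leaves); rewrite mem_cat yA.
have A_stable : nodes_stable T (A ++ A) by move: AA_stable; rewrite /rep /= cats0.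
have A_depth y : y \in leaves T -> (count_mem y A * 2 ^ depth T y)%N = size A.
  move=> yT; rewrite count_leaf_depth // => [|z /A_leaves //].
  by apply/eqP; rewrite -all_count; apply/allP => z /A_leaves /T_leaves.
have T_uniq : uniq (leaves T).
  exact: subseq_uniq (leaves_subseq T) (sorted_uniq ltn_trans ltnn T_sorted).
rewrite gf_cost_stable // (sum_count_mem _ T_uniq); last first.
  by move=> y /(allP (andP X_stable).1).
rewrite X_rep size_rep natr_sum mulr_suml; apply: eq_big_seq => y yT.
rewrite count_rep -(A_depth y yT) !natrM.
have y_in_A : (count_mem y A != 0)%N.
  by apply: contra A_nonnil => /eqP c0; rewrite -size_eq0 -(A_depth y yT) c0.
by field; rewrite !pnatr_eq0 expn_eq0 y_in_A -lt0n j_pos.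
Qed.
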